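(* Let $\{U'_{k,n}\}_{k\in\mathbb Z,n\in\mathbb N}$ and $\{V'_{\{k,k+1\},n}\}_{k\in\mathbb Z,n\in\mathbb N}$ be independent Bernoulli random variables with parameter $\epsilon>0$, and let $Z=Z(U',V')$. If $\epsilon$ is small enough, then for every finite initial set $Z_0$ the process $Z$ dies out almost surely, and there are constants $\beta_0,\beta_1>0$ such that for every finite nonempty $Z_0$, $$\mathbb E(N_{\mathrm{ext}}\mid Z_0)\le\beta_0\log|Z_0|+\beta_1,$$ where $N_{\mathrm{ext}}=\inf\{n\ge0:Z_n=\emptyset\}$.
   Context: Given $\{0,1\}$-valued variables $U_{k,n}$ and $V_{\{k,k+1\},n}$ ($k\in\mathbb Z$, $n\in\mathbb N$), define the graph $H$ on $\mathbb Z\times\mathbb N$: if $U_{k,n}=1$ add edges from $(k,n)$ to $(k-1,n+1),(k,n+1),(k+1,n+1)$; if $V_{\{k,k+1\},n}=1$ add these edges for both $(k,n)$ and $(k+1,n)$ and also the edge $(k,n)$–$(k+1,n)$. An $H$-valid path is a sequence of $H$-adjacent vertices $(k_0,n_0),\dots,(k_f,n_f)$ with $n_0\le\dots\le n_f$ and $n_i<n_f$ for all $i<f$. Given a finite set $Z_0\subseteq\mathbb Z$, for $n\ge1$ let $Z_n$ be the set of $k$ such that some $H$-valid path goes from $Z_0\times\{0\}$ to $(k,n)$; this defines $Z=Z(U,V)$. $Z$ dies out if $Z_n=\emptyset$ for some $n$. *)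

From HB Require Import structures.
From mathcomp Require Import all_boot all_order all_algebra.
From mathcomp Require Import all_classical all_reals all_analysis.
Set Implicit Arguments. Unset Strict Implicit. Unset Printing Implicit Defensive.
Import Order.TTheory GRing.Theory Num.Theory.
Local Open Scope ring_scope.
Local Open Scope classical_set_scope.

Definition vtx := (int * nat)%type.

(* A configuration: u k n = U_{k,n}, v k n = V_{{k,k+1},n}. *)
Definition config := (int -> nat -> bool)%type.

Definition up_edge (u v : config) (a b : vtx) : bool :=
  [&& b.2 == a.2.+1, `|b.1 - a.1| <= 1 & [|| u a.1 a.2, v a.1 a.2 | v (a.1 - 1) a.2]].

Definition hor_edge (u v : config) (a b : vtx) : bool :=
  [&& b.2 == a.2, b.1 == a.1 + 1 & v a.1 a.2].

Definition H_adj (u v : config) (a b : vtx) : bool :=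
  [|| up_edge u v a b, up_edge u v b a, hor_edge u v a b | hor_edge u v b a].

Definition valid_path (u v : config) (x : vtx) (s : seq vtx) : Prop :=
  [/\ path (H_adj u v) x s,
      sorted (fun a b : vtx => (a.2 <= b.2)%N) (x :: s) &
      forall i, (i < size s)%N -> ((nth x (x :: s) i).2 < (last x s).2)%N].

Definition Zset (u v : config) (Z0 : seq int) (n : nat) (k : int) : Prop :=
  if n is 0 then k \in Z0 else
  exists (x : vtx) (s : seq vtx),
    [/\ x.1 \in Z0, x.2 = 0%N, valid_path u v x s & last x s = (k, n)].

Definition Z_empty (u v : config) (Z0 : seq int) (n : nat) : Prop :=
  forall k, ~ Zset u v Z0 n k.

Definition dies_out (u v : config) (Z0 : seq int) : Prop :=
  exists n, Z_empty u v Z0 n.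

(* N_ext = inf {n >= 0 : Z_n = emptyset}, equal to +oo if Z never dies out. *)
Definition N_ext (R : realType) (u v : config) (Z0 : seq int) : \bar R :=
  ereal_inf [set (n%:R)%:E | n in [set n | Z_empty u v Z0 n]].

(* Index set of the random variables: inl (k,n) for U'_{k,n},
   inr (k,n) for V'_{{k,k+1},n}. *)
Definition idx := (vtx + vtx)%type.

Definition iid_bernoulli (R : realType) (d : measure_display)
    (T : measurableType d) (P : probability T R) (X : idx -> T -> bool)
    (eps : R) : Prop :=
  [/\ (forall i, measurable [set w : T | X i w]),
      (forall i, P [set w : T | X i w] = eps%:E) &
      (forall (J : seq idx) (b : idx -> bool), uniq J ->
         P [set w : T | all (fun i => X i w == b i) J]
         = (\prod_(i <- J) P [set w : T | X i w = b i])%E)].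

Definition Ucfg T (X : idx -> T -> bool) (w : T) : config :=
  fun k n => X (inl (k, n)) w.
Definition Vcfg T (X : idx -> T -> bool) (w : T) : config :=
  fun k n => X (inr (k, n)) w.

(* A vertex of level n >= 1 is reached only through open variables: between
   two consecutive levels an H-valid path either climbs along an edge opened
   by a single U or V variable, or first runs along j + 1 open horizontal
   edges, whose last V variable also opens the climb.  Recording such moves as
   steps charged with the distinct variables they use, {Z_n <> empty} is
   covered by cylinder events whose probabilities, summed over the possible
   step sequences, are at most |Z_0| (21 eps)^n <= |Z_0| 2^-n for
   eps <= 1/42.  Hence Z dies out almost surely, and
   E N_ext <= sum_n min(1, |Z_0| 2^-n) <= log_2 |Z_0| + 3. *)

From HB Require Import structures.
From mathcomp Require Import all_boot all_order all_algebra.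
From mathcomp Require Import all_classical all_reals all_analysis.
From mathcomp Require Import zify ring lra.
Set Implicit Arguments. Unset Strict Implicit. Unset Printing Implicit Defensive.
Import Order.TTheory GRing.Theory Num.Theory.
Local Open Scope ring_scope.

Notation step := (nat * nat * nat)%type.

Definition runR (a : int) (m j : nat) : seq idx :=
  [seq inr (a + i%:Z, m) | i <- iota 0 j].

Definition runL (a : int) (m j : nat) : seq idx :=
  [seq inr (a - i.+1%:Z, m) | i <- iota 0 j].

Lemma iota1E j : iota 1 j = map S (iota 0 j).
Proof. by rewrite -(iotaDl 1). Qed.

Lemma runR_cons a m j : runR a m j.+1 = inr (a, m) :: runR (a + 1) m j.
Proof.
rewrite /runR /= addr0 iota1E -map_comp; congr (_ :: _).
by apply: eq_map => i /=; congr (inr (_, m)); lia.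
Qed.

Lemma runL_cons a m j : runL (a + 1) m j.+1 = inr (a, m) :: runL a m j.
Proof.
rewrite /runL /= addrK iota1E -map_comp; congr (_ :: _).
by apply: eq_map => i /=; congr (inr (_, m)); lia.
Qed.

(* A step [(k, j, d)] from column [a] at level [m]: for [k < 3] climb by the
   single edge opened by [U_(a,m)], [V_(a,m)] or [V_(a-1,m)]; for [k = 3]
   ([k = 4]) first walk [j + 1] horizontal edges to the right (left), whose
   last [V] variable also opens the climb.  Each step is charged only with the
   variables listed by [step_vars], which are distinct. *)
Definition step_vars (a : int) (m : nat) (c : step) : seq idx :=
  let: (k, j, _) := c in
  match k with
  | 0 => [:: inl (a, m)]
  | 1 => [:: inr (a, m)]
  | 2 => [:: inr (a - 1, m)]
  | 3 => runR a m j.+1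
  | _ => runL a m j.+1
  end.

Lemma step_vars3 a m j d : step_vars a m (3%N, j, d) = runR a m j.+1.
Proof. by []. Qed.

Lemma step_vars4 a m k j d : step_vars a m (k.+4, j, d) = runL a m j.+1.
Proof. by []. Qed.

Definition step_target (a : int) (c : step) : int :=
  let: (k, j, d) := c in
  (if (k < 3)%N then a else if k == 3%N then a + j.+1%:Z else a - j.+1%:Z)
  + (d%:Z - 1).

Definition step_ok (M : nat) (c : step) : bool :=
  let: (k, j, d) := c in
  (d < 3)%N && (((k < 3)%N && (j == 0%N)) || ((3 <= k < 5)%N && (j < M)%N)).

Definition step_shapes (M : nat) : seq (nat * nat) :=
  [seq (k, 0%N) | k <- iota 0 3] ++ [seq (k, j) | k <- [:: 3%N; 4%N], j <- iota 0 M].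

Definition steps (M : nat) : seq step :=
  [seq (kj.1, kj.2, d) | kj <- step_shapes M, d <- iota 0 3].

Lemma mem_steps M c : (c \in steps M) = step_ok M c.
Proof.
case: c => [[k j] d]; apply/idP/idP.
- case/allpairsP => [[[k' j'] d'] /= [Hkj Hd [= -> -> ->]]].
  move: Hd; rewrite !inE => Hd.
  move: Hkj; rewrite mem_cat => /orP [/mapP [k'' Hk [= -> ->]]|
                                     /allpairsP [[k'' j''] /= [Hk Hj [= -> ->]]]].
  + by move: Hk; rewrite !inE; lia.
  + by move: Hk Hj; rewrite !inE mem_iota; lia.
- move=> /andP [Hd Hkj].
  apply/allpairsP; exists ((k, j), d) => /=; split => //; last by rewrite !inE; lia.
  rewrite mem_cat; case/orP: Hkj => /andP [Hk Hj].
  + apply/orP; left; move/eqP: Hj => ->; apply/mapP; exists k => //.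
    by rewrite !inE; lia.
  + apply/orP; right; apply/allpairsP; exists (k, j) => /=; split => //.
    * by rewrite !inE; lia.
    * by rewrite mem_iota; lia.
Qed.

Section OpenWalks.
Variables (u v : config).

Definition is_open (i : idx) : bool :=
  match i with inl p => u p.1 p.2 | inr p => v p.1 p.2 end.

Fixpoint open_walk (M m : nat) (a : int) (n : nat) : bool :=
  if n is n'.+1 then
    has (fun c => all is_open (step_vars a m c) && open_walk M m.+1 (step_target a c) n')
        (steps M)
  else true.

Lemma open_walkE M m a n : open_walk M m a n.+1 =
  has (fun c => all is_open (step_vars a m c) && open_walk M m.+1 (step_target a c) n)
      (steps M).
Proof. by []. Qed.

Lemma open_walkS M m a n :
  open_walk M m a n.+1 <->
  exists c, [/\ step_ok M c, all is_open (step_vars a m c)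
              & open_walk M m.+1 (step_target a c) n].
Proof.
split => [/hasP [c]|[c [Hc H1 H2]]].
- by rewrite mem_steps => Hc /andP [H1 H2]; exists c.
- by apply/hasP; exists c; rewrite ?mem_steps ?H1.
Qed.

Lemma open_walk_mono M M' m a n :
  (M <= M')%N -> open_walk M m a n -> open_walk M' m a n.
Proof.
move=> HM; elim: n m a => [//|n IH] m a /open_walkS [c [Hc H1 H2]].
apply/open_walkS; exists c; split => //; last exact: IH.
by move: Hc HM {H1 H2}; case: c => [[k j] d] /=; lia.
Qed.

(* A horizontal edge before the first step is absorbed into that step. *)
Lemma open_walk_consR M m a n :
  v a m -> open_walk M m (a + 1) n.+1 -> open_walk M.+1 m a n.+1.
Proof.
move=> Va /open_walkS [[[k j] d] [ok op /(open_walk_mono (leqnSn M)) wk]].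
apply/open_walkS; have [k3|k3] := ltnP k 3.
  exists (3%N, 0%N, d); split; first by move: ok => /=; lia.
  - by rewrite step_vars3 runR_cons /= Va.
  - by move: wk; rewrite /= k3 /=; congr open_walk; lia.
case: k k3 ok op wk => [|[|[|[|[|k]]]]] // _ ok op wk.
- exists (3%N, j.+1, d); split; first by move: ok => /=; lia.
  + by rewrite step_vars3 runR_cons /= Va.
  + by move: wk => /=; congr open_walk; lia.
- case: j ok op wk => [|j] ok op wk.
  + exists (1%N, 0%N, d); split; first by move: ok => /=; lia.
    * by rewrite /= Va.
    * by move: wk => /=; congr open_walk; lia.
  + exists (4%N, j, d); split; first by move: ok => /=; lia.
    * by move: op; rewrite !step_vars4 runL_cons => /andP [].
    * by move: wk => /=; congr open_walk; lia.
- by move: ok => /=; lia.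
Qed.

Lemma open_walk_consL M m a n :
  v a m -> open_walk M m a n.+1 -> open_walk M.+1 m (a + 1) n.+1.
Proof.
move=> Va /open_walkS [[[k j] d] [ok op /(open_walk_mono (leqnSn M)) wk]].
apply/open_walkS; have [k3|k3] := ltnP k 3.
  exists (4%N, 0%N, d); split; first by move: ok => /=; lia.
  - by rewrite step_vars4 runL_cons /= Va.
  - by move: wk; rewrite /= k3 /=; congr open_walk; lia.
case: k k3 ok op wk => [|[|[|[|[|k]]]]] // _ ok op wk.
- case: j ok op wk => [|j] ok op wk.
  + exists (2%N, 0%N, d); split; first by move: ok => /=; lia.
    * by rewrite /= addrK Va.
    * by move: wk => /=; congr open_walk; lia.
  + exists (3%N, j, d); split; first by move: ok => /=; lia.
    * by move: op; rewrite !step_vars3 runR_cons => /andP [].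
    * by move: wk => /=; congr open_walk; lia.
- exists (4%N, j.+1, d); split; first by move: ok => /=; lia.
  + by rewrite step_vars4 runL_cons /= Va.
  + by move: wk => /=; congr open_walk; lia.
- by move: ok => /=; lia.
Qed.

Lemma up_edge_open_step x y :
  up_edge u v x y -> exists c, [/\ step_ok 0 c, all is_open (step_vars x.1 x.2 c)
                                  & step_target x.1 c = y.1].
Proof.
case/and3P => _ Hd Ho; pose d := absz (y.1 - x.1 + 1).
have ok k : (k < 3)%N -> step_ok 0 (k, 0%N, d) by move=> k3 /=; lia.
have tg k : (k < 3)%N -> step_target x.1 (k, 0%N, d) = y.1.
  by move=> k3 /=; rewrite k3; lia.
case/or3P: Ho => Ho; [exists (0%N, 0%N, d) | exists (1%N, 0%N, d) | exists (2%N, 0%N, d)];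
  by split; rewrite ?ok ?tg //= Ho.
Qed.

Lemma path_open_walk x s n :
  path (H_adj u v) x s -> path (fun a b : vtx => (a.2 <= b.2)%N) x s ->
  (last x s).2 = (x.2 + n)%N -> exists M, open_walk M x.2 x.1 n.
Proof.
elim: s x n => [|y s IH] x n /=.
  by move=> _ _ Hl; exists 0%N; have -> : n = 0%N by lia.
move=> /andP [Hxy Hp] /andP [Hle Hs] Hl.
case: n Hl => [|n] Hl; first by exists 0%N.
case/or4P: Hxy => [Hup|/and3P [/eqP Hx2 _ _]|/and3P [/eqP Hy2 /eqP Hy1 Hv]|
                   /and3P [/eqP Hx2 /eqP Hx1 Hv]]; last 3 first.
- by move: Hle; rewrite Hx2; lia.
- have [M HM] := IH y n.+1 Hp Hs ltac:(lia).
  by exists M.+1; apply: open_walk_consR Hv _; rewrite -Hy2 -Hy1.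
- have [M HM] := IH y n.+1 Hp Hs ltac:(lia).
  by exists M.+1; rewrite Hx1 Hx2; apply: open_walk_consL.
have [c [Hc H1 H2]] := up_edge_open_step Hup.
have /eqP Hy2 : y.2 == x.2.+1 by case/and3P: Hup.
have [M HM] := IH y n Hp Hs ltac:(lia).
exists M; apply/open_walkS; exists c; split => //.
- by move: Hc; case: c {H1 H2} => [[k j] d] /=; lia.
- by rewrite H2 -Hy2.
Qed.

End OpenWalks.

Fixpoint walk_supports (a : int) (m n M : nat) : seq (seq idx) :=
  if n is n'.+1 then
    flatten [seq [seq step_vars a m c ++ J | J <- walk_supports (step_target a c) m.+1 n' M]
            | c <- steps M]
  else [:: [::]].

Lemma walk_supportsE a m n M : walk_supports a m n.+1 M =
  flatten [seq [seq step_vars a m c ++ J | J <- walk_supports (step_target a c) m.+1 n M]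
          | c <- steps M].
Proof. by []. Qed.

Lemma has_flatten (T : Type) (p : pred T) (ss : seq (seq T)) :
  has p (flatten ss) = has (has p) ss.
Proof. by elim: ss => //= s ss IH; rewrite has_cat IH. Qed.

Lemma open_walk_supports u v M m a n :
  open_walk u v M m a n = has (all (is_open u v)) (walk_supports a m n M).
Proof.
elim: n m a => [//|n IH] m a.
rewrite open_walkE walk_supportsE has_flatten has_map; apply: eq_has => c /=.
rewrite has_map IH; case E: (all (is_open u v) (step_vars a m c)) => /=.
- by apply: eq_has => J /=; rewrite all_cat E.
- by apply/esym/hasPn => J _ /=; rewrite all_cat E.
Qed.

Definition idx_level (i : idx) : nat := match i with inl p => p.2 | inr p => p.2 end.

Lemma run_uniq_level (f : nat -> int) m j : injective f ->
  uniq [seq inr (f i, m) : idx | i <- iota 0 j] &&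
  all (fun i => idx_level i == m) [seq inr (f i, m) : idx | i <- iota 0 j].
Proof.
move=> f_inj; rewrite map_inj_uniq ?iota_uniq; last by move=> i1 i2 [/f_inj].
by apply/allP => _ /mapP [i _ ->] /=.
Qed.

Lemma step_vars_uniq_level a m c :
  uniq (step_vars a m c) && all (fun i => idx_level i == m) (step_vars a m c).
Proof.
case: c => [[[|[|[|[|k]]]] j] d]; try by rewrite /= eqxx.
- rewrite step_vars3 /runR; apply: (@run_uniq_level (fun i : nat => a + i%:Z)).
  by move=> i1 i2 /=; lia.
- rewrite step_vars4 /runL; apply: (@run_uniq_level (fun i : nat => a - i.+1%:Z)).
  by move=> i1 i2 /=; lia.
Qed.

Lemma walk_supports_uniq a m n M J :
  J \in walk_supports a m n M -> uniq J && all (fun i => (m <= idx_level i)%N) J.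
Proof.
elim: n m a J => [|n IH] m a J; first by rewrite inE => /eqP ->.
rewrite walk_supportsE => /flattenP [_ /mapP [c _ ->]] /mapP [J' /IH /andP [U2 A2] ->].
have /andP [U1 A1] := step_vars_uniq_level a m c.
rewrite cat_uniq U1 U2 all_cat /= andbT; apply/and3P; split.
- apply/hasPn => i /(allP A2) H2; apply/negP => /(allP A1) /eqP H1; lia.
- by apply/allP => i /(allP A1) /eqP ->.
- by apply/allP => i /(allP A2); lia.
Qed.

Section Weights.
Variables (R : realType) (eps : R).
Hypotheses (eps_ge0 : 0 <= eps) (eps_le_half : 2 * eps <= 1).

Lemma size_step_vars a m k j d :
  size (step_vars a m (k, j, d)) = if (k < 3)%N then 1%N else j.+1.
Proof.
by case: k => [|[|[|[|k]]]] //; rewrite ?step_vars3 ?step_vars4 size_map size_iota.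
Qed.

Lemma sum_geometric_le M : \sum_(j <- iota 0 M) eps ^+ j.+1 <= 2 * eps - 2 * eps ^+ M.+1.
Proof.
elim: M => [|M IH]; first by rewrite big_nil expr1 subrr.
rewrite -addn1 iotaD big_cat /= big_cons big_nil addr0 add0n addn1.
have : eps ^+ M.+2 <= 2^-1 * eps ^+ M.+1.
  by rewrite exprS; apply: ler_wpM2r; [exact: exprn_ge0 | move: eps_le_half; lra].
move: IH eps_ge0 eps_le_half; lra.
Qed.

(* For each of the three landing columns: weight [eps] for each of the three
   single climbs and at most [2 eps] for the runs in each direction. *)
Lemma sum_steps_weight a m M :
  \sum_(c <- steps M) eps ^+ size (step_vars a m c) <= 21 * eps.
Proof.
rewrite /steps big_allpairs_dep.
under eq_bigr => kj _ do
  rewrite (_ : iota 0 3 = [:: 0%N; 1%N; 2%N]) // !big_cons big_nil !size_step_vars.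
apply: (@le_trans _ _ (\sum_(kj <- step_shapes M)
                        3 * eps ^+ (if (kj.1 < 3)%N then 1%N else kj.2.+1))).
  by apply: ler_sum => kj _ /=; move: eps_ge0; lra.
rewrite /step_shapes big_cat big_map big_allpairs.
rewrite (_ : iota 0 3 = [:: 0%N; 1%N; 2%N]) // !big_cons !big_nil /=.
rewrite !expr1 addr0 -!mulr_sumr.
have := sum_geometric_le M; have : 0 <= eps ^+ M.+1 by exact: exprn_ge0.
move: eps_ge0; lra.
Qed.

Lemma walk_supports_weight a m n M :
  \sum_(J <- walk_supports a m n M) eps ^+ size J <= (21 * eps) ^+ n.
Proof.
elim: n a m => [|n IH] a m; first by rewrite /= big_seq1.
rewrite walk_supportsE big_flatten big_map.
under eq_bigr => c _ do rewrite big_map.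
apply: (@le_trans _ _ (\sum_(c <- steps M) eps ^+ size (step_vars a m c) * (21 * eps) ^+ n)).
  apply: ler_sum => c _; under eq_bigr => J _ do rewrite size_cat exprD.
  by rewrite -mulr_sumr; apply: ler_wpM2l; [exact: exprn_ge0 | exact: IH].
rewrite -mulr_suml exprS; apply: ler_wpM2r; last exact: sum_steps_weight.
by apply: exprn_ge0; move: eps_ge0; lra.
Qed.

End Weights.

Local Open Scope classical_set_scope.

Section Cylinders.
Variables (R : realType) (d : measure_display) (T : measurableType d)
  (P : probability T R) (X : idx -> T -> bool) (eps : R).
Hypothesis HX : iid_bernoulli P X eps.

Definition cyl (J : seq idx) : set T := [set w | all (fun i => X i w) J].

Definition cyl_any (LL : seq (seq idx)) : set T :=
  [set w | has (fun J => all (fun i => X i w) J) LL].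

Lemma cyl_cons i J : cyl (i :: J) = [set w | X i w] `&` cyl J.
Proof. by apply/seteqP; split => w /= /andP. Qed.

Lemma cyl_any_cons J LL : cyl_any (J :: LL) = cyl J `|` cyl_any LL.
Proof. by apply/seteqP; split => w /= /orP. Qed.

Lemma measurable_cyl J : measurable (cyl J).
Proof.
elim: J => [|i J IH]; last by rewrite cyl_cons; apply: measurableI => //; case: HX.
by rewrite (_ : cyl [::] = setT); [exact: measurableT | apply/seteqP; split].
Qed.

Lemma measurable_cyl_any LL : measurable (cyl_any LL).
Proof.
elim: LL => [|J LL IH].
  by rewrite (_ : cyl_any [::] = set0); [exact: measurable0 | apply/seteqP; split].
by rewrite cyl_any_cons; exact: measurableU (measurable_cyl J) IH.
Qed.

Lemma P_cyl J : uniq J -> P (cyl J) = (eps ^+ size J)%:E.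
Proof.
case: HX => _ PX indep /(indep J (fun=> true)).
rewrite (_ : [set w | _] = cyl J); last first.
  by apply/seteqP; split => w /=; rewrite (eq_all (fun i => eqb_id (X i w))).
move=> ->; under eq_bigr => i _ do rewrite PX.
rewrite prodEFin; congr (_%:E).
by elim: J => [|i J IH]; rewrite ?big_nil ?big_cons ?IH ?exprS.
Qed.

Lemma P_cyl_any_le LL : (forall J, J \in LL -> uniq J) ->
  (P (cyl_any LL) <= (\sum_(J <- LL) eps ^+ size J)%:E)%E.
Proof.
elim: LL => [|J LL IH] LLu.
  by rewrite (_ : cyl_any [::] = set0) ?measure0 ?big_nil //; apply/seteqP; split.
rewrite cyl_any_cons big_cons EFinD.
apply: le_trans (measureU2 _ (measurable_cyl J) (measurable_cyl_any LL)) _.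
apply: leeD; first by rewrite -P_cyl ?LLu ?mem_head.
by apply: IH => J' HJ'; apply: LLu; rewrite inE HJ' orbT.
Qed.

Lemma is_open_cfg w : is_open (Ucfg X w) (Vcfg X w) =1 X^~ w.
Proof. by case => [[k m]|[k m]]. Qed.

Definition walk_event (Z0 : seq int) (n M : nat) : set T :=
  cyl_any (flatten [seq walk_supports z 0 n M | z <- Z0]).

Definition reach_event (Z0 : seq int) (n : nat) : set T := \bigcup_M walk_event Z0 n M.

Lemma walk_eventP Z0 n M w :
  walk_event Z0 n M w <-> exists2 z, z \in Z0 & open_walk (Ucfg X w) (Vcfg X w) M 0 z n.
Proof.
have E z : open_walk (Ucfg X w) (Vcfg X w) M 0 z n =
           has (all (X^~ w)) (walk_supports z 0 n M).
  by rewrite open_walk_supports; apply: eq_has => J; exact: eq_all (is_open_cfg w) J.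
rewrite /walk_event /cyl_any /= has_flatten has_map.
split => [/hasP [z Hz H]|[z Hz H]]; first by exists z; rewrite ?E.
by apply/hasP; exists z; rewrite /= -?E.
Qed.

Lemma walk_event_mono Z0 n : {homo walk_event Z0 n : M M' / (M <= M')%N >-> M `<=` M'}.
Proof.
move=> M M' HM w /walk_eventP [z Hz H]; apply/walk_eventP; exists z => //.
exact: open_walk_mono H.
Qed.

Lemma measurable_reach_event Z0 n : measurable (reach_event Z0 n).
Proof. by apply: bigcupT_measurable => M; exact: measurable_cyl_any. Qed.

Lemma Zset_reach_event Z0 n k w : Zset (Ucfg X w) (Vcfg X w) Z0 n k -> reach_event Z0 n w.
Proof.
case: n => [|n] /=.
  by move=> Hk; exists 0%N => //; apply/walk_eventP; exists k.
move=> [x [s [Hx1 Hx2 [Hp Hs _] Hl]]].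
have [M HM] := path_open_walk (n := n.+1) Hp Hs ltac:(by rewrite Hl Hx2).
by exists M => //; apply/walk_eventP; exists x.1; rewrite -?Hx2.
Qed.

Hypotheses (eps_ge0 : 0 <= eps) (eps_le_half : 2 * eps <= 1).

Lemma P_walk_event_le Z0 n M :
  (P (walk_event Z0 n M) <= ((size Z0)%:R * (21 * eps) ^+ n)%:E)%E.
Proof.
have Hu J : J \in flatten [seq walk_supports z 0 n M | z <- Z0] -> uniq J.
  by case/flattenP => _ /mapP [z _ ->] /walk_supports_uniq /andP [].
apply: le_trans (P_cyl_any_le Hu) _.
rewrite lee_fin big_flatten big_map.
elim: Z0 {Hu} => [|z Z0 IH]; first by rewrite big_nil mul0r.
rewrite big_cons /= -add1n natrD mulrDl mul1r; apply: lerD IH.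
exact: walk_supports_weight.
Qed.

Lemma P_reach_event_le Z0 n :
  (P (reach_event Z0 n) <= ((size Z0)%:R * (21 * eps) ^+ n)%:E)%E.
Proof.
have nd : nondecreasing_seq (walk_event Z0 n).
  by move=> M M' HM; rewrite subsetEset; exact: walk_event_mono.
have cvgP := nondecreasing_cvg_mu (mu := P) (fun M => measurable_cyl_any _)
  (measurable_reach_event Z0 n) nd.
rewrite -(cvg_lim _ cvgP) //.
apply: lime_le; first by apply/cvg_ex; eexists; exact: cvgP.
by apply: nearW => M; exact: P_walk_event_le.
Qed.

End Cylinders.

Lemma sum_capped_geometric_le (R : realType) (s : R) (N0 K : nat) : 0 <= s ->
  \sum_(0 <= n < K) (if (n < N0)%N then 1 else s * 2^-1 ^+ n) <=
  (minn K N0)%:R + 2 * s * 2^-1 ^+ N0 - 2 * s * 2^-1 ^+ maxn K N0.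
Proof.
move=> s0; elim: K => [|K IH]; first by rewrite big_nil min0n max0n; lra.
rewrite big_nat_recr //=; case: ltnP => HK.
- move: IH; rewrite (minn_idPl (ltnW HK)) (minn_idPl HK).
  rewrite (maxn_idPr (ltnW HK)) (maxn_idPr HK) -addn1 natrD; lra.
- move: IH; rewrite (minn_idPr HK) (minn_idPr (leqW HK)).
  rewrite (maxn_idPl HK) (maxn_idPl (leqW HK)).
  have -> : 2 * s * 2^-1 ^+ K.+1 = s * 2^-1 ^+ K :> R by rewrite exprSr; field.
  lra.
Qed.

(* Unlike [ge0_le_integral], no measurability is required: the integral of a
   nonnegative function is the supremum of the integrals of its simple
   minorants. *)
Lemma ge0_le_integralT d (T : measurableType d) (R : realType)
    (mu : {measure set T -> \bar R}) (f g : T -> \bar R) :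
  (forall x, (0 <= f x)%E) -> (forall x, (f x <= g x)%E) ->
  (\int[mu]_x f x <= \int[mu]_x g x)%E.
Proof.
move=> f0 fg; have g0 x : (0 <= g x)%E by exact: le_trans (fg x).
rewrite !ge0_integralTE //; apply: ereal_sup_le => _ [h hf <-].
by exists h => // x; exact: le_trans (hf x) (fg x).
Qed.

Lemma ge_nat_pinfty (R : realType) (x : \bar R) :
  (forall K : nat, ((K%:R)%:E <= x)%E) -> x = +oo%E.
Proof.
case: x => [r| |] xK //; last by have := xK 0%N.
have := archi_boundP (normr_ge0 r); have := xK (Num.Def.archi_bound `|r|).
rewrite lee_fin => rK rlt; exfalso; have := ler_norm r; lra.
Qed.

Lemma sum_indic_ge d (T : measurableType d) (R : realType) (E : nat -> set T) w K :
  (forall n, (n < K)%N -> E n w) -> ((K%:R)%:E <= \sum_(n <oo) (\1_(E n) w : R)%:E)%E.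
Proof.
move=> EK; apply: le_trans (nneseries_lim_ge K _); last by move=> n _ _; rewrite lee_fin.
rewrite (eq_big_nat _ _ (F2 := fun=> 1%:E)); first by rewrite sumEFin sumr_const_nat subn0.
by move=> n /andP [_ nK]; rewrite indicE mem_set //; exact: EK.
Qed.

Lemma integral_sum_indic d (T : measurableType d) (R : realType)
    (mu : {measure set T -> \bar R}) (E : nat -> set T) :
  (forall n, measurable (E n)) ->
  (\int[mu]_w \sum_(n <oo) (\1_(E n) w)%:E = \sum_(n <oo) mu (E n))%E.
Proof.
move=> mE; rewrite integral_nneseries //.
- by apply: eq_eseriesr => n _; rewrite integral_indic ?setIT.
- move=> n; apply/measurable_realfun.measurable_EFinP.
  exact: measurable_realfun.measurable_indic.
Qed.

Section Extinction.
Variables (R : realType) (d : measure_display) (T : measurableType d)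
  (P : probability T R) (X : idx -> T -> bool) (eps : R).
Hypotheses (HX : iid_bernoulli P X eps) (eps_ge0 : 0 <= eps) (eps_small : 42 * eps <= 1).

Lemma P_reach_event_half Z0 n :
  (P (reach_event X Z0 n) <= ((size Z0)%:R * 2^-1 ^+ n)%:E)%E.
Proof.
apply: le_trans (P_reach_event_le HX eps_ge0 _ Z0 n) _; first by move: eps_small; lra.
rewrite lee_fin ler_wpM2l // lerXn2r ?nnegrE ?invr_ge0 //; move: eps_ge0 eps_small; lra.
Qed.

Lemma reach_event_null Z0 : P (\bigcap_n reach_event X Z0 n) = 0%E.
Proof.
have mN : measurable (\bigcap_n reach_event X Z0 n).
  by apply: bigcapT_measurable => n; exact: (measurable_reach_event HX).
have g0 : geometric (size Z0)%:R (2^-1 : R) @ \oo --> 0.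
  by apply: cvg_geometric; rewrite ger0_norm; lra.
have Eg0 : (EFin \o geometric (size Z0)%:R (2^-1 : R)) @ \oo --> 0%:E.
  by apply: cvg_comp g0 _.
apply/eqP; rewrite eq_le measure_ge0 andbT -[0%E]/(0%:E) -(cvg_lim _ Eg0) //.
apply: lime_ge; first by apply/cvg_ex; exists 0%:E.
apply: nearW => n; apply: le_trans (P_reach_event_half Z0 n).
apply: le_measure; rewrite ?inE //; last by move=> w; apply.
exact: (measurable_reach_event HX).
Qed.

Lemma dies_out_ae Z0 : {ae P, forall w, dies_out (Ucfg X w) (Vcfg X w) Z0}.
Proof.
exists (\bigcap_n reach_event X Z0 n); split.
- by apply: bigcapT_measurable => n; exact: (measurable_reach_event HX).
- exact: reach_event_null.
- move=> w /= Hw n _; apply: contrapT => Hn; apply: Hw; exists n => k Hk.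
  by apply: Hn; exact: Zset_reach_event Hk.
Qed.

Lemma Z_nonempty_reach Z0 n w :
  ~ Z_empty (Ucfg X w) (Vcfg X w) Z0 n -> reach_event X Z0 n w.
Proof. by move/existsNP => [k /contrapT /Zset_reach_event]; apply. Qed.

Lemma N_ext_le_sum_reach Z0 w :
  (N_ext R (Ucfg X w) (Vcfg X w) Z0 <= \sum_(n <oo) (\1_(reach_event X Z0 n) w)%:E)%E.
Proof.
have [[N0 N0_empty]|alive] := pselect (dies_out (Ucfg X w) (Vcfg X w) Z0); last first.
  rewrite (@ge_nat_pinfty _ (\sum_(n <oo) _)) ?leey // => K.
  by apply: sum_indic_ge => n _; apply: Z_nonempty_reach => Zn; apply: alive; exists n.
have /ex_minnP [N /asboolP ZN minN] : exists n, `[< Z_empty (Ucfg X w) (Vcfg X w) Z0 n >].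
  by exists N0; exact: asboolT.
apply: (@le_trans _ _ (N%:R)%:E); first by apply: ereal_inf_lbound; exists N.
apply: sum_indic_ge => n nN; apply: Z_nonempty_reach => Zn.
by have := minN n (asboolT Zn); lia.
Qed.

Lemma N_ext_ge0 Z0 w : (0 <= N_ext R (Ucfg X w) (Vcfg X w) Z0)%E.
Proof. by apply: le_ereal_inf_tmp => _ [n _ <-]; rewrite lee_fin. Qed.

Lemma sum_P_reach_le Z0 N0 : (size Z0)%:R * 2^-1 ^+ N0 <= 1 :> R ->
  (\sum_(n <oo) P (reach_event X Z0 n) <= (N0%:R + 2)%:E)%E.
Proof.
move=> sN0; apply: lime_le; first by apply: is_cvg_nneseries => n _ _.
apply: nearW => K; apply: (@le_trans _ _
  (\sum_(0 <= n < K) (if (n < N0)%N then 1 else (size Z0)%:R * 2^-1 ^+ n)%:E)%E).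
  apply: lee_sum => n _; case: ifP => _; last exact: P_reach_event_half.
  exact/probability_le1/(measurable_reach_event HX).
rewrite sumEFin lee_fin; apply: le_trans (sum_capped_geometric_le N0 K (ler0n _ _)) _.
have : (minn K N0)%:R <= N0%:R :> R by rewrite ler_nat geq_minr.
have : 0 <= (size Z0)%:R * 2^-1 ^+ maxn K N0 :> R by rewrite mulr_ge0 ?exprn_ge0.
move: sN0; rewrite -!mulrA; lra.
Qed.

Lemma expected_N_ext_le Z0 : Z0 != [::] ->
  (\int[P]_w N_ext R (Ucfg X w) (Vcfg X w) Z0
     <= ((ln (2 : R))^-1 * ln (size Z0)%:R + 3)%:E)%E.
Proof.
move=> Z0_nil; have Z0_gt0 : (0 < size Z0)%N by case: Z0 Z0_nil.
pose t := trunc_log 2 (size Z0).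
apply: le_trans (ge0_le_integralT _ (N_ext_ge0 Z0) (N_ext_le_sum_reach Z0)) _.
rewrite integral_sum_indic; last exact: (measurable_reach_event HX).
apply: le_trans (sum_P_reach_le (N0 := t.+1) _) _.
  rewrite exprVn -natrX ler_pdivrMr ?ltr0n ?expn_gt0 // mul1r ler_nat.
  exact/ltnW/trunc_log_ltn.
have t_le : t%:R <= (ln (2 : R))^-1 * ln (size Z0)%:R.
  rewrite mulrC ler_pdivlMr ?ln_gt0 ?ltr1n // mulr_natl -lnXn //.
  by rewrite ler_ln ?posrE ?exprn_gt0 ?ltr0n // -natrX ler_nat trunc_logP.
by rewrite lee_fin -addn1 natrD; move: t_le; lra.
Qed.

End Extinction.

Theorem lemma2 (R : realType) :
  exists eps0 : R, 0 < eps0 /\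
  forall eps : R, 0 < eps -> eps < eps0 ->
    (forall (d : measure_display) (T : measurableType d) (P : probability T R)
            (X : idx -> T -> bool),
       iid_bernoulli P X eps ->
       forall Z0 : seq int,
         {ae P, forall w, dies_out (Ucfg X w) (Vcfg X w) Z0})
    /\
    exists beta0 beta1 : R, 0 < beta0 /\ 0 < beta1 /\
      forall (d : measure_display) (T : measurableType d) (P : probability T R)
             (X : idx -> T -> bool),
        iid_bernoulli P X eps ->
        forall Z0 : seq int, Z0 != [::] -> uniq Z0 ->
          (\int[P]_w N_ext R (Ucfg X w) (Vcfg X w) Z0
             <= (beta0 * ln (size Z0)%:R + beta1)%:E)%E.
Proof.
exists (1 / 42); split => [|eps eps_gt0 eps_lt]; first lra.
have eps_ge0 : 0 <= eps by lra.
have eps_small : 42 * eps <= 1 by lra.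
split => [d T P X HX Z0|]; first exact: (dies_out_ae HX eps_ge0 eps_small).
exists (ln 2)^-1, 3; split; first by rewrite invr_gt0 ln_gt0 //; lra.
split => [|d T P X HX Z0 Z0_nil _]; first lra.
exact: (expected_N_ext_le HX eps_ge0 eps_small Z0_nil).
Qed.
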